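(* Let $p$ be a rational prime with $p\equiv7\pmod{16}$, and let $a,b$ be positive integers with $p=(a+b\sqrt2)(a-b\sqrt2)$. Then there exists $\alpha\in\mathbb{Z}[\zeta_{16}+\zeta_{16}^7]$ such that $$a+b\sqrt2=\sigma_1(\alpha)\sigma_{15}(\alpha)=\sigma_7(\alpha)\sigma_9(\alpha),\qquad a-b\sqrt2=\sigma_3(\alpha)\sigma_{13}(\alpha)=\sigma_5(\alpha)\sigma_{11}(\alpha).$$
   Context: $\zeta_{16}=e^{2\pi i/16}$ and $\sqrt2=\zeta_{16}^2+\zeta_{16}^{14}$. For odd $i$, $\sigma_i$ is the automorphism of $\mathbb{Q}(\zeta_{16})$ with $\sigma_i(\zeta_{16})=\zeta_{16}^i$, applied to elements of the subring $\mathbb{Z}[\zeta_{16}+\zeta_{16}^7]$ (the ring of integers of the degree-4 subfield $\mathbb{Q}(\zeta_{16}+\zeta_{16}^7)$). *)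

From HB Require Import structures.
From mathcomp Require Import all_boot all_order all_algebra all_field.
Set Implicit Arguments. Unset Strict Implicit. Unset Printing Implicit Defensive.
Import Order.TTheory GRing.Theory Num.Theory.
Local Open Scope ring_scope.

(* zeta16 = e^{2 pi i/16}: in algC, n.-root z is the n-th root of z with
   minimal non-negative argument, so 8.-root (-1) = e^{i pi/8}. *)
Definition zeta16 : algC := 8.-root (-1).

Definition sqrt2 : algC := zeta16 ^+ 2 + zeta16 ^+ 14.

Definition theta16 : algC := zeta16 + zeta16 ^+ 7.

Definition in_Ztheta (x : algC) : Prop :=
  exists f : {poly int}, x = (map_poly (fun z : int => z%:~R) f).[theta16].

Definition is_sigma (i : nat) (u : {rmorphism algC -> algC}) : Prop :=
  u zeta16 = zeta16 ^+ i.

(* Put theta = zeta16 + zeta16^7, so that theta^2 = sqrt2 - 2 and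
   Z[theta] = Z[sqrt2] + Z[sqrt2] theta.  For alpha = x + y theta with x, y in
   Z[sqrt2], both sigma1(alpha) sigma15(alpha) and sigma7(alpha) sigma9(alpha)
   equal x^2 + delta y^2 with delta = 2 - sqrt2, while sigma3 sigma13 and
   sigma5 sigma11 give its image under sqrt2 |-> -sqrt2.  So it suffices to
   represent pi = a + b sqrt2 by the form x^2 + delta y^2 over Z[sqrt2].

   Since p = 7 (mod 16), the Frobenius of F_(p^2) fixes zeta^j + zeta^(7j),
   so theta has an image r in F_p: (r^2 + 2)^2 = 2 and a + b (r^2 + 2) = 0.
   Hence pi divides r^2 + delta, and the vectors e1 = (pi, 0), e2 = (-r, 1)
   have Gram matrix pi [[A, B], [B, C]] with A C - B^2 = delta.  Such data are
   reduced as in Gauss reduction: multiplying e1 by unit squares makes the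
   totally positive height D conj(A)^2 small, and then replacing e2 by
   e2 - k e1, with k a rounding of B / A, lowers the norm of A.  This stops
   when N(A) is 1, 2 or 4 (norms 3 and 5 do not occur), i.e. when A is
   delta^k times a totally positive unit; those units are squares, and each
   factor delta can be removed since delta | x^2 + delta y^2 forces delta | x. *)

From HB Require Import structures.
From mathcomp Require Import all_boot all_order all_algebra all_field.
From mathcomp Require Import cyclic zify ring lra.
Import Order.TTheory GRing.Theory Num.Theory.
Set Implicit Arguments. Unset Strict Implicit. Unset Printing Implicit Defensive.
Local Open Scope ring_scope.

Lemma sqr_le_addr_ge0 (m n : int) : 0 <= n -> m ^+ 2 <= n ^+ 2 -> 0 <= n + m.
Proof. by move=> n_ge0 mn; nia. Qed.

Lemma sqr_lt_addr_gt0 (m n : int) : 0 <= n -> m ^+ 2 < n ^+ 2 -> 0 < n + m.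
Proof. by move=> n_ge0 mn; nia. Qed.

Lemma sqr_le_of_norm_le (m n : int) : `|m| <= n -> m ^+ 2 <= n ^+ 2.
Proof. by move=> mn; nia. Qed.

Lemma sqr_mod8 (x : int) :
  exists k, [\/ x ^+ 2 = 8 * k, x ^+ 2 = 8 * k + 1 | x ^+ 2 = 8 * k + 4].
Proof.
have := divz_eq x 4; set q := (x %/ 4)%Z; set r := (x %% 4)%Z => ->.
have : r = 0 \/ r = 1 \/ r = 2 \/ r = 3 by rewrite /r; lia.
case=> [|[|[|]]] ->.
- by exists (2 * q ^+ 2); apply: Or31; ring.
- by exists (2 * q ^+ 2 + q); apply: Or32; ring.
- by exists (2 * q ^+ 2 + 2 * q); apply: Or33; ring.
- by exists (2 * q ^+ 2 + 3 * q + 1); apply: Or32; ring.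
Qed.

Lemma exists_round (m n : int) : 0 < n -> exists k, `|2 * (m - n * k)| <= n.
Proof. by move=> n_gt0; exists ((2 * m + n) %/ (2 * n))%Z; lia. Qed.

(* The two halves of the estimate N(r^2 + Y) < n^4 behind the rounding step,
   for |r_i| <= n / 2 and Y totally positive of norm 2 n^2 with Y_0 <= 2 n. *)
Lemma cross_bound (n y0 y1 r0 r1 : int) : 0 < y0 -> y0 <= 2 * n -> `|y1| <= n ->
  2 * y0 * (r0 ^+ 2 + 2 * r1 ^+ 2) - 8 * r0 * r1 * y1
    <= 8 * n * r0 ^+ 2 + 12 * n * r1 ^+ 2.
Proof.
move=> y0_gt0 y0_le y1_le.
have h1 : 0 <= (n + y1) * (r0 + r1) ^+ 2 + (n - y1) * (r0 - r1) ^+ 2.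
  by apply: addr_ge0; apply: mulr_ge0; rewrite ?sqr_ge0 //; lia.
have h2 : 0 <= (2 * n - y0) * (r0 ^+ 2 + 2 * r1 ^+ 2).
  by apply: mulr_ge0; [lia | have := sqr_ge0 r0; have := sqr_ge0 r1; lia].
have : 8 * n * r0 ^+ 2 + 12 * n * r1 ^+ 2
         - (2 * y0 * (r0 ^+ 2 + 2 * r1 ^+ 2) - 8 * r0 * r1 * y1)
       = 2 * ((n + y1) * (r0 + r1) ^+ 2 + (n - y1) * (r0 - r1) ^+ 2)
         + 2 * ((2 * n - y0) * (r0 ^+ 2 + 2 * r1 ^+ 2)) by ring.
lia.
Qed.

Lemma corner_bound (n S R : int) : 6 <= n -> 0 <= S -> 4 * S <= n ^+ 2 ->
  0 <= R -> 4 * R <= n ^+ 2 ->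
  (S - 2 * R) ^+ 2 + 8 * n * S + 12 * n * R + 2 * n ^+ 2 < n ^+ 4.
Proof.
move=> n6 S0 Sn R0 Rn.
have pS : 0 <= S * (n ^+ 2 - 4 * S) by apply: mulr_ge0; lia.
have pR : 0 <= R * (n ^+ 2 - 4 * R) by apply: mulr_ge0; lia.
have pnR : 0 <= n * (n ^+ 2 - 4 * R) by apply: mulr_ge0; lia.
have pn2R : 0 <= n ^+ 2 * (n ^+ 2 - 4 * R) by apply: mulr_ge0; lia.
have pn3 : 0 <= n ^+ 3 * (n - 6) by apply: mulr_ge0; lia.
have pn2 : 0 <= n ^+ 2 * (n - 6) by apply: mulr_ge0; lia.
(* By pS and pR, (S - 2 R)^2 is dominated by a bilinear expression in S and R;
   split on the sign of its coefficient of S. *)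
have [hc|hc] := lerP 0 (n ^+ 2 + 32 * n - 16 * R).
- have : 0 <= (n ^+ 2 - 4 * S) * (n ^+ 2 + 32 * n - 16 * R) by apply: mulr_ge0; lia.
  lia.
- have : 0 <= S * - (n ^+ 2 + 32 * n - 16 * R) by apply: mulr_ge0; lia.
  lia.
Qed.

(** * The ring Z[sqrt 2] *)

Record zsqrt2 := ZSqrt2 { rpart : int; spart : int }.

Definition zsqrt2_pair x := (rpart x, spart x).
Definition pair_zsqrt2 (x : int * int) := ZSqrt2 x.1 x.2.
Lemma zsqrt2_pairK : cancel zsqrt2_pair pair_zsqrt2. Proof. by case. Qed.
HB.instance Definition _ := Countable.copy zsqrt2 (can_type zsqrt2_pairK).

Lemma zsqrt2_ext x y : rpart x = rpart y -> spart x = spart y -> x = y.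
Proof. by case: x y => [? ?] [? ?] /= -> ->. Qed.

Definition zsqrt2_add x y := ZSqrt2 (rpart x + rpart y) (spart x + spart y).
Definition zsqrt2_opp x := ZSqrt2 (- rpart x) (- spart x).
Definition zsqrt2_mul x y :=
  ZSqrt2 (rpart x * rpart y + 2 * (spart x * spart y))
         (rpart x * spart y + spart x * rpart y).

Ltac zsqrt2_by_parts := move=> *; apply: zsqrt2_ext => /=; ring.

Lemma zsqrt2_addA : associative zsqrt2_add. Proof. by zsqrt2_by_parts. Qed.
Lemma zsqrt2_addC : commutative zsqrt2_add. Proof. by zsqrt2_by_parts. Qed.
Lemma zsqrt2_add0 : left_id (ZSqrt2 0 0) zsqrt2_add. Proof. by zsqrt2_by_parts. Qed.
Lemma zsqrt2_addN : left_inverse (ZSqrt2 0 0) zsqrt2_opp zsqrt2_add.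
Proof. by zsqrt2_by_parts. Qed.
HB.instance Definition _ :=
  GRing.isZmodule.Build zsqrt2 zsqrt2_addA zsqrt2_addC zsqrt2_add0 zsqrt2_addN.

Lemma zsqrt2_mulA : associative zsqrt2_mul. Proof. by zsqrt2_by_parts. Qed.
Lemma zsqrt2_mulC : commutative zsqrt2_mul. Proof. by zsqrt2_by_parts. Qed.
Lemma zsqrt2_mul1 : left_id (ZSqrt2 1 0) zsqrt2_mul. Proof. by zsqrt2_by_parts. Qed.
Lemma zsqrt2_mulDl : left_distributive zsqrt2_mul +%R. Proof. by zsqrt2_by_parts. Qed.
Lemma zsqrt2_oner_neq0 : ZSqrt2 1 0 != 0. Proof. by []. Qed.
HB.instance Definition _ := GRing.Zmodule_isComNzRing.Build zsqrt2
  zsqrt2_mulA zsqrt2_mulC zsqrt2_mul1 zsqrt2_mulDl zsqrt2_oner_neq0.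

Lemma zsqrt2_nat n : n%:R = ZSqrt2 n 0.
Proof. by elim: n => // n IHn; rewrite mulrS IHn; apply: zsqrt2_ext => /=; lia. Qed.

Lemma zsqrt2_int (m : int) : m%:~R = ZSqrt2 m 0.
Proof.
by case: m => n; rewrite ?NegzE ?mulrNz -pmulrn zsqrt2_nat //; apply: zsqrt2_ext.
Qed.

Definition rt2 := ZSqrt2 0 1.
Definition delta := 2 - rt2.

Definition zconj x := ZSqrt2 (rpart x) (- spart x).

Lemma zconj_is_zmod_morphism : zmod_morphism zconj.
Proof. by zsqrt2_by_parts. Qed.
Lemma zconj_is_monoid_morphism : monoid_morphism zconj.
Proof. by split; [apply: zsqrt2_ext | zsqrt2_by_parts]. Qed.
HB.instance Definition _ :=
  GRing.isZmodMorphism.Build zsqrt2 zsqrt2 zconj zconj_is_zmod_morphism.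
HB.instance Definition _ :=
  GRing.isMonoidMorphism.Build zsqrt2 zsqrt2 zconj zconj_is_monoid_morphism.

Definition znorm x : int := rpart x ^+ 2 - 2 * spart x ^+ 2.

Lemma znormE x : (znorm x)%:~R = x * zconj x.
Proof. by rewrite zsqrt2_int; apply: zsqrt2_ext => /=; rewrite /znorm; ring. Qed.
Lemma znormM x y : znorm (x * y) = znorm x * znorm y.
Proof. by rewrite /znorm /=; ring. Qed.
Lemma znorm_conj x : znorm (zconj x) = znorm x.
Proof. by rewrite /znorm /=; ring. Qed.
Lemma znormX x n : znorm (x ^+ n) = znorm x ^+ n.
Proof. by elim: n => [|n IHn]; rewrite ?expr0 // !exprS znormM IHn. Qed.

Lemma znorm_neq3_5 x : znorm x <> 3 /\ znorm x <> 5.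
Proof.
have [k hk] := sqr_mod8 (rpart x); have [l hl] := sqr_mod8 (spart x).
by rewrite /znorm; case: hk => ->; case: hl => ->; lia.
Qed.

(* Totally positive: both real embeddings [a +- b * sqrt 2] are positive. *)
Definition totpos x := 0 < rpart x /\ 2 * spart x ^+ 2 < rpart x ^+ 2.

Lemma totpos_norm_gt0 x : totpos x -> 0 < znorm x.
Proof. by rewrite /znorm => -[]; lia. Qed.

Lemma totpos_conj x : totpos x -> totpos (zconj x).
Proof. by rewrite /totpos /=; nia. Qed.

Lemma totposM x y : totpos x -> totpos y -> totpos (x * y).
Proof.
case: x y => [x0 x1] [y0 y1] [/= hx0 hx] [/= hy0 hy]; split=> /=.
  apply: sqr_lt_addr_gt0; first exact: mulr_ge0 (ltW hx0) (ltW hy0).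
  have -> : (2 * (x1 * y1)) ^+ 2 = (2 * x1 ^+ 2) * (2 * y1 ^+ 2) by ring.
  by rewrite exprMn; apply: ltr_pM => //; apply: mulr_ge0 => //; apply: sqr_ge0.
rewrite -subr_gt0.
have -> : (x0 * y0 + 2 * (x1 * y1)) ^+ 2 - 2 * (x0 * y1 + x1 * y0) ^+ 2 =
  (x0 ^+ 2 - 2 * x1 ^+ 2) * (y0 ^+ 2 - 2 * y1 ^+ 2) by ring.
by rewrite mulr_gt0 // subr_gt0.
Qed.

Lemma totpos_sqr x : znorm x != 0 -> totpos (x ^+ 2).
Proof. by case: x => x0 x1; rewrite /znorm /totpos expr2 /=; nia. Qed.

Lemma totpos_cancel a x : totpos a -> totpos (a * x) -> totpos x.
Proof.
move=> ha /(totposM (totpos_conj ha)); have := totpos_norm_gt0 ha.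
have -> : zconj a * (a * x) = (znorm a)%:~R * x by rewrite znormE; ring.
by rewrite zsqrt2_int /totpos /=; nia.
Qed.

Lemma totpos_sqrD b d : totpos d -> totpos (b ^+ 2 + d).
Proof.
case: b d => [b0 b1] [d0 d1] [/= hd0 hd]; rewrite expr2 /totpos /=.
set U := b0 * b0 + 2 * (b1 * b1); set u := b0 * b1 + b1 * b0.
have sq2 z : 0 <= 2 * z ^+ 2 :> int by apply: mulr_ge0 => //; apply: sqr_ge0.
have hU0 : 0 <= U by rewrite /U -!expr2; apply: addr_ge0; rewrite ?sq2 ?sqr_ge0.
have hU : 2 * u ^+ 2 <= U ^+ 2.
  rewrite -subr_ge0 (_ : _ - _ = (b0 ^+ 2 - 2 * b1 ^+ 2) ^+ 2) ?sqr_ge0 //.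
  by rewrite /U /u; ring.
have hUd : 0 <= U * d0 + - (2 * u * d1).
  apply: sqr_le_addr_ge0; first exact: mulr_ge0 hU0 (ltW hd0).
  have -> : (- (2 * u * d1)) ^+ 2 = (2 * u ^+ 2) * (2 * d1 ^+ 2) by ring.
  by rewrite exprMn; apply: ler_pM; rewrite ?sq2 // ltW.
split; first by rewrite ltr_wpDl.
rewrite -subr_gt0.
have -> : (U + d0) ^+ 2 - 2 * (u + d1) ^+ 2 =
  (U ^+ 2 - 2 * u ^+ 2) + (d0 ^+ 2 - 2 * d1 ^+ 2) + 2 * (U * d0 + - (2 * u * d1)).
  by ring.
by rewrite ltr_wpDr ?mulr_ge0 // ltr_wpDl ?subr_ge0 ?subr_gt0.
Qed.

Lemma totpos_unit_sqr u : totpos u -> znorm u = 1 -> exists e, u = e ^+ 2.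
Proof.
have [n] : exists n : nat, rpart u <= n%:Z by exists (absz (rpart u)); lia.
elim: n u => [|n IHn] u hn hu nu; first by case: hu; lia.
have step c : znorm c = -1 -> rpart (c ^+ 2 * u) <= n -> exists e, u = e ^+ 2.
  move=> nc /IHn [||e he].
  - by apply: totposM hu; apply: totpos_sqr; rewrite nc.
  - by rewrite znormM znormX nc nu.
  have hc : c * zconj c = -1 by rewrite -znormE nc.
  exists (zconj c * e).
  by rewrite exprMn -he mulrA -exprMn [zconj c * c]mulrC hc sqrrN expr1n mul1r.
move: step hn hu nu; case: u => u0 u1 step; rewrite /totpos /znorm /=.
move=> hn [hu0 hu] nu; have [hu1|hu1|hu1] := ltrgtP u1 0.
- apply: (step (1 + rt2)) => //.
  by rewrite [_ ^+ 2](_ : _ = ZSqrt2 3 2) /=; [nia | apply: zsqrt2_ext].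
- apply: (step (1 - rt2)) => //.
  by rewrite [_ ^+ 2](_ : _ = ZSqrt2 3 (-2)) /=; [nia | apply: zsqrt2_ext].
- have -> : u0 = 1 by nia.
  by exists 1; rewrite expr1n hu1.
Qed.

Lemma deltaE : delta = ZSqrt2 2 (-1). Proof. by apply: zsqrt2_ext. Qed.
Lemma totpos_delta : totpos delta. Proof. by rewrite deltaE. Qed.
Lemma znorm_delta : znorm delta = 2. Proof. by rewrite deltaE. Qed.

Lemma delta_lreg : GRing.lreg delta.
Proof.
move=> x y; rewrite deltaE => /(congr1 zsqrt2_pair) [hr hs].
by apply: zsqrt2_ext; lia.
Qed.

Lemma rpart_delta_even z : (2 %| rpart (delta * z))%Z.
Proof. by rewrite deltaE /=; lia. Qed.

Lemma delta_dvd x : (2 %| rpart x)%Z -> exists y, x = delta * y.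
Proof.
move=> hx; exists (ZSqrt2 (rpart x + spart x) ((rpart x %/ 2)%Z + spart x)).
by rewrite deltaE; apply: zsqrt2_ext => /=; lia.
Qed.

Lemma totpos_delta_dvd nu t : totpos nu -> znorm nu = 2 * t ->
  exists2 mu, nu = delta * mu & totpos mu /\ znorm mu = t.
Proof.
move=> hnu nnu; have [mu numu] : exists y, nu = delta * y.
  by apply: delta_dvd; move: nnu; rewrite /znorm; nia.
exists mu => //; split; first by apply: (totpos_cancel totpos_delta); rewrite -numu.
by move: nnu; rewrite numu znormM znorm_delta; lia.
Qed.

(** * The form x^2 + delta y^2 *)

Definition bform (e f : zsqrt2 * zsqrt2) := e.1 * f.1 + delta * (e.2 * f.2).
Definition scalev c (e : zsqrt2 * zsqrt2) := (c * e.1, c * e.2).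
Definition shiftv k (e1 e2 : zsqrt2 * zsqrt2) := (e2.1 - k * e1.1, e2.2 - k * e1.2).

Lemma bform_scalev c e : bform (scalev c e) (scalev c e) = c ^+ 2 * bform e e.
Proof. by rewrite /bform /=; ring. Qed.

Lemma bform_delta_descent pi mu e : bform e e = pi * (delta * mu) ->
  exists e', bform e' e' = pi * mu.
Proof.
case: e => x y; rewrite /bform /= => he.
have hxx : x * x = delta * (pi * mu - y * y).
  by apply: (addIr (delta * (y * y))); rewrite he; ring.
have [z xz] : exists z, x = delta * z.
  apply: delta_dvd; have := rpart_delta_even (pi * mu - y * y).
  by rewrite -hxx /=; nia.
exists (y, z); apply: delta_lreg => /=.
have -> : delta * (y * y + delta * (z * z)) = (delta * z) * (delta * z) + delta * (y * y).
  by ring.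
by rewrite -xz he; ring.
Qed.

Lemma bform_unit_descent pi nu e : bform e e = pi * nu -> totpos nu -> znorm nu = 1 ->
  exists e', bform e' e' = pi.
Proof.
move=> he hnu nnu; have [c nuc] := totpos_unit_sqr hnu nnu.
have hc : (c * zconj c) ^+ 2 = 1 by rewrite -znormE -rmorphXn /= -znormX -nuc nnu.
by exists (scalev (zconj c) e); rewrite -[RHS]mulr1 -hc bform_scalev he nuc; ring.
Qed.

Lemma bform_norm2X_descent k pi nu e : bform e e = pi * nu -> totpos nu ->
  znorm nu = 2 ^+ k -> exists e', bform e' e' = pi.
Proof.
elim: k nu e => [|k IHk] nu e he hnu nnu; first exact: bform_unit_descent he hnu nnu.
have [mu numu [hmu nmu]] := totpos_delta_dvd hnu (etrans nnu (exprS _ _)).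
rewrite numu in he; have [e' he'] := bform_delta_descent he.
exact: IHk he' hmu nmu.
Qed.

(** * Reduction *)

Definition scaled_gram (pi : zsqrt2) (e1 e2 : zsqrt2 * zsqrt2) (A B C D : zsqrt2) :=
  [/\ bform e1 e1 = pi * A, bform e1 e2 = pi * B, bform e2 e2 = pi * C,
      A * C = B ^+ 2 + D & [/\ totpos A, totpos D & znorm D = 2]].

(* Totally positive of norm 2 N(A)^2; its rational part is the secondary
   measure of the descent, lowered by the unit rescalings. *)
Definition gram_height (A D : zsqrt2) := D * zconj A ^+ 2.

Lemma scaled_gram_init pi r C : totpos pi -> pi * C = r ^+ 2 + delta ->
  scaled_gram pi (pi, 0) (- r, 1) pi (- r) C delta.
Proof.
move=> hpi hC; split; rewrite /bform /= ?hC; try ring.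
by split; [| exact: totpos_delta | exact: znorm_delta].
Qed.

Lemma scaled_gram_shift (pi A B C D k : zsqrt2) e1 e2 : scaled_gram pi e1 e2 A B C D ->
  scaled_gram pi (shiftv k e1 e2) e1 (C - 2 * k * B + k ^+ 2 * A) (B - k * A) A D.
Proof.
case: e1 e2 => [x1 y1] [x2 y2] [h11 h12 h22 hAC [hA hD nD]].
have hAA' : A * (C - 2 * k * B + k ^+ 2 * A) = (B - k * A) ^+ 2 + D.
  by rewrite mulrDr mulrBr hAC; ring.
rewrite /bform /= in h11 h12 h22.
split; rewrite ?/bform /=; last split=> //.
- transitivity (x2 * x2 + delta * (y2 * y2) - 2 * k * (x1 * x2 + delta * (y1 * y2))
                + k ^+ 2 * (x1 * x1 + delta * (y1 * y1))); first by ring.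
  by rewrite h11 h12 h22; ring.
- transitivity (x1 * x2 + delta * (y1 * y2) - k * (x1 * x1 + delta * (y1 * y1))).
    by ring.
  by rewrite h11 h12; ring.
- exact: h11.
- by rewrite mulrC hAA'.
- by apply: (totpos_cancel hA); rewrite hAA'; apply: totpos_sqrD.
Qed.

Lemma scaled_gram_scale (pi A B C D c : zsqrt2) e1 e2 : znorm c ^+ 2 = 1 ->
  scaled_gram pi e1 e2 A B C D ->
  scaled_gram pi (scalev c e1) e2 (c ^+ 2 * A) (c * B) C (c ^+ 2 * D).
Proof.
move=> nc [h11 h12 h22 hAC [hA hD nD]].
have hc2 : totpos (c ^+ 2) by apply: totpos_sqr; apply: contra_eq_neq nc => ->.
split=> //; last split.
- by rewrite bform_scalev h11; ring.
- by rewrite /bform /= -[RHS]mulrCA -h12 /bform; ring.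
- by rewrite -mulrA hAC; ring.
- exact: totposM.
- exact: totposM.
- by rewrite znormM znormX nc nD mul1r.
Qed.

Lemma totpos_gram_height A D : totpos A -> totpos D -> totpos (gram_height A D).
Proof.
by move=> /totpos_conj hA hD; apply: totposM hD _; rewrite expr2; apply: totposM.
Qed.

Lemma znorm_gram_height A D : znorm (gram_height A D) = znorm D * znorm A ^+ 2.
Proof. by rewrite znormM znormX znorm_conj. Qed.

Lemma gram_height_scale (A D c : zsqrt2) : znorm c ^+ 2 = 1 ->
  gram_height (c ^+ 2 * A) (c ^+ 2 * D) = zconj c ^+ 2 * gram_height A D.
Proof.
move=> nc; have hc : (c * zconj c) ^+ 2 = 1 by rewrite -znormE -rmorphXn /= nc.
by rewrite /gram_height rmorphM rmorphXn /= -[RHS]mul1r -hc; ring.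
Qed.

Lemma totpos_balance y (n : int) : 0 <= n -> totpos y -> znorm y = 2 * n ^+ 2 ->
  2 * n < rpart y -> exists2 c, znorm c ^+ 2 = 1 & rpart (zconj c ^+ 2 * y) < rpart y.
Proof.
case: y => y0 y1 n_ge0 [y0_gt0 _] ny y0_gt; rewrite /znorm /= in y0_gt0 ny y0_gt.
have hy1 : y0 ^+ 2 < 4 * y1 ^+ 2 by nia.
have [y1_gt0|y1_le0] := ltrP 0 y1.
- exists (1 + rt2) => //.
  by rewrite [_ ^+ 2](_ : _ = ZSqrt2 3 (-2)) /=; [nia | apply: zsqrt2_ext].
- exists (1 - rt2) => //.
  by rewrite [_ ^+ 2](_ : _ = ZSqrt2 3 2) /=; [nia | apply: zsqrt2_ext].
Qed.

Lemma znorm_sqrD_lt (n : int) r y : 6 <= n -> totpos y -> znorm y = 2 * n ^+ 2 ->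
  rpart y <= 2 * n -> `|2 * rpart r| <= n -> `|2 * spart r| <= n ->
  znorm (r ^+ 2 + y) < n ^+ 4.
Proof.
case: r y => [r0 r1] [y0 y1] n6 [y0_gt0 _] ny y0_le hr0 hr1.
rewrite /znorm /= in y0_gt0 ny y0_le hr0 hr1.
have y1_le : `|y1| <= n by nia.
have S_le : 4 * r0 ^+ 2 <= n ^+ 2.
  by have := sqr_le_of_norm_le hr0; rewrite exprMn; lia.
have R_le : 4 * r1 ^+ 2 <= n ^+ 2.
  by have := sqr_le_of_norm_le hr1; rewrite exprMn; lia.
have corner := corner_bound n6 (sqr_ge0 r0) S_le (sqr_ge0 r1) R_le.
have cross := cross_bound r0 r1 y0_gt0 y0_le y1_le.
rewrite /znorm [_ ^+ 2 + _]/= expr2 /=.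
have -> : (r0 * r0 + 2 * (r1 * r1) + y0) ^+ 2 - 2 * (r0 * r1 + r1 * r0 + y1) ^+ 2 =
  (r0 ^+ 2 - 2 * r1 ^+ 2) ^+ 2 + (2 * y0 * (r0 ^+ 2 + 2 * r1 ^+ 2) - 8 * r0 * r1 * y1)
  + (y0 ^+ 2 - 2 * y1 ^+ 2) by ring.
by rewrite ny; apply: le_lt_trans corner; rewrite lerD2r -addrA lerD2l.
Qed.

Lemma scaled_gram_shift_norm_lt pi e1 e2 (A B C D : zsqrt2) :
  scaled_gram pi e1 e2 A B C D -> 6 <= znorm A ->
  rpart (gram_height A D) <= 2 * znorm A ->
  exists k, znorm (C - 2 * k * B + k ^+ 2 * A) < znorm A.
Proof.
move=> hI n6 hy; have [_ _ _ _ [hA hD nD]] := hI.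
set n := znorm A in n6 hy *; have n_gt0 : 0 < n by lia.
have [k0 hk0] := exists_round (rpart (B * zconj A)) n_gt0.
have [k1 hk1] := exists_round (spart (B * zconj A)) n_gt0.
pose k := ZSqrt2 k0 k1; exists k.
have [_ _ _ hAA' _] := scaled_gram_shift k hI.
set A' := C - 2 * k * B + k ^+ 2 * A in hAA' *.
have e : zconj A ^+ 2 * (A' * A) = (B * zconj A - n%:~R * k) ^+ 2 + gram_height A D.
  by rewrite hAA' /gram_height /n znormE; ring.
have := znorm_sqrD_lt (r := B * zconj A - n%:~R * k) n6 (totpos_gram_height hA hD).
rewrite znorm_gram_height nD -/n -e znormM znormX znormM znorm_conj -/n zsqrt2_int.
move=> /(_ erefl hy) /= bound; rewrite /= in hk0 hk1.
have : n ^+ 3 * znorm A' < n ^+ 3 * n.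
  have -> : n ^+ 3 * znorm A' = n ^+ 2 * (znorm A' * n) by ring.
  have -> : n ^+ 3 * n = n ^+ 4 by ring.
  by apply: bound; lia.
by rewrite ltr_pM2l // exprn_gt0.
Qed.

Lemma totpos_norm_pow2_or_ge6 x : totpos x ->
  (exists k : nat, znorm x = 2 ^+ k) \/ 6 <= znorm x.
Proof.
move=> hx; have := totpos_norm_gt0 hx; have [n3 n5] := znorm_neq3_5 x.
have [|lt6 gt0] := lerP 6 (znorm x); [by right | left].
have : znorm x = 1 \/ znorm x = 2 \/ znorm x = 4 by lia.
by case=> [|[|]] ->; [exists 0%N | exists 1%N | exists 2%N].
Qed.

Lemma scaled_gram_represents pi e1 e2 (A B C D : zsqrt2) :
  scaled_gram pi e1 e2 A B C D -> exists e, bform e e = pi.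
Proof.
move=> hI; have [m hm] : exists m : nat, znorm A <= m.
  by exists (absz (znorm A)); lia.
have [h hh] : exists h : nat, rpart (gram_height A D) <= h.
  by exists (absz (rpart (gram_height A D))); lia.
elim: m h e1 e2 A B C D hI hm hh => [|m IHm] h e1 e2 A B C D hI.
  by have [_ _ _ _ [/totpos_norm_gt0 ? _ _]] := hI; lia.
elim: h e1 e2 A B C D hI => [|h IHh] e1 e2 A B C D hI hm hh;
  have [h11 _ _ _ [hA hD nD]] := hI.
  by have [] := totpos_gram_height hA hD; lia.
have [[k nA]|n6] := totpos_norm_pow2_or_ge6 hA.
  exact: bform_norm2X_descent h11 hA nA.
have [hy|hy] := lerP (rpart (gram_height A D)) (2 * znorm A).
  have [k hk] := scaled_gram_shift_norm_lt hI n6 hy.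
  apply: (IHm (absz (rpart (gram_height (C - 2 * k * B + k ^+ 2 * A) D))) _ _ _ _ _ _
           (scaled_gram_shift k hI)); lia.
have nY : znorm (gram_height A D) = 2 * znorm A ^+ 2.
  by rewrite znorm_gram_height nD.
have [c nc hc] :=
  totpos_balance (ltW (totpos_norm_gt0 hA)) (totpos_gram_height hA hD) nY hy.
apply: (IHh _ _ _ _ _ _ (scaled_gram_scale nc hI)).
  by rewrite znormM znormX nc mul1r.
by rewrite gram_height_scale //; lia.
Qed.

(** * A root of theta modulo p *)

Section PrimeCharacteristic.
Variables (F : fieldType) (p : nat).
Hypothesis pF : p \in [pchar F].

Lemma pchar_natr_inj i j : (i < p)%N -> (j < p)%N -> i%:R = j%:R :> F -> i = j.
Proof.
wlog le_ij : i j / (i <= j)%N => [hwlog ip jp eij|ip jp eij].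
  by case: (leqP i j) => [|/ltnW] h; [apply: hwlog | symmetry; apply: hwlog].
have : (p %| j - i)%N by rewrite (dvdn_pcharf pF) natrB // eij subrr.
by rewrite -eqn_mod_dvd // !modn_small // => /eqP.
Qed.

Lemma pFrobenius_fixed_natr (t : F) : t ^+ p = t -> exists r : nat, t = r%:R.
Proof.
move=> tp; pose rs := [seq i%:R | i <- iota 0 p] : seq F.
have rsU : uniq rs.
  rewrite map_inj_in_uniq ?iota_uniq // => i j.
  by rewrite !mem_iota => /andP[_ ?] /andP[_ ?]; apply: pchar_natr_inj.
have [/mapP[i _ ->]|tNrs] := boolP (t \in rs); first by exists i.
have p_gt1 := prime_gt1 (pcharf_prime pF).
pose q : {poly F} := 'X^p - 'X.
have size_q : size q = p.+1 by rewrite size_polyDl size_polyXn // size_polyN size_polyX.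
have q_neq0 : q != 0 by rewrite -size_poly_eq0 size_q.
have roots_q : all (root q) (t :: rs).
  apply/allP => x; rewrite inE => /orP[/eqP ->|/mapP[i _ ->]]; rewrite /root !hornerE.
    by rewrite tp subrr.
  by rewrite -(pFrobenius_autE pF) pFrobenius_aut_nat subrr.
have := max_poly_roots q_neq0 roots_q; rewrite /= tNrs rsU size_q size_map size_iota.
by rewrite ltnn => /(_ isT).
Qed.

End PrimeCharacteristic.

Lemma finField_card_pred_gt0 (F : finFieldType) : (0 < #|F|.-1)%N.
Proof. by rewrite -subn1 subn_gt0; exact: finNzRing_gt1. Qed.

Lemma finField_prim_root (F : finFieldType) : exists g : F, (#|F|.-1).-primitive_root g.
Proof.
have N_gt0 := finField_card_pred_gt0 F.
pose rs := enum (predC1 (0 : F)).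
have rs1 : all (#|F|.-1).-unity_root rs.
  apply/allP => x; rewrite mem_enum /= => x_neq0; rewrite unity_rootE.
  rewrite -(inj_eq (mulfI x_neq0)) -exprS prednK ?mulr1; first exact/eqP/expf_card.
  exact: ltnW (finNzRing_gt1 _).
have rs_size : (#|F|.-1 <= size rs)%N by rewrite -cardE cardC1.
by have /hasP[g _ ?] := has_prim_root N_gt0 rs1 (enum_uniq _) rs_size; exists g.
Qed.

Lemma finField_root8N1 (F : finFieldType) : (16 %| #|F|.-1)%N ->
  exists z : F, z ^+ 8 = -1.
Proof.
move=> /dvdnP[M eN]; have [g g_prim] := finField_prim_root F.
have M_gt0 : (0 < M)%N.
  by move: (finField_card_pred_gt0 F); rewrite eN muln_gt0 => /andP[].
exists (g ^+ M); have : (g ^+ M ^+ 8) ^+ 2 = 1 by rewrite -!exprM -eN prim_expr_order.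
move/eqP; rewrite sqrf_eq1 => /orP[|/eqP //].
rewrite -exprM -(prim_order_dvd g_prim) eN => /(dvdn_leq _).
by rewrite muln_gt0 M_gt0 => /(_ isT); rewrite leq_pmul2l.
Qed.

Section RootOfTheta16.
Variables (F : fieldType) (p : nat) (z : F).
Hypotheses (pF : p \in [pchar F]) (p16 : (p %% 16 = 7)%N) (z8 : z ^+ 8 = -1).

Lemma root8N1_exp_mod n : z ^+ n = z ^+ (n %% 16).
Proof.
rewrite {1}(divn_eq n 16) exprD mulnC exprM -[16%N]/(8 * 2)%N exprM z8.
by rewrite sqrrN expr1n expr1n mul1r.
Qed.

Lemma pFrobenius_root8N1_fixed j k :
  (j * 7 = k %[mod 16])%N -> (k * 7 = j %[mod 16])%N ->
  (z ^+ j + z ^+ k) ^+ p = z ^+ j + z ^+ k.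
Proof.
move=> jk kj; rewrite -(pFrobenius_autE pF) rmorphD /= !pFrobenius_autE -!exprM.
rewrite [z ^+ (j * p)]root8N1_exp_mod [z ^+ (k * p)]root8N1_exp_mod.
by rewrite -modnMmr -[(k * p %% 16)%N]modnMmr p16 jk kj -!root8N1_exp_mod addrC.
Qed.

Lemma exists_theta_mod (a b : F) : a ^+ 2 = 2 * b ^+ 2 ->
  exists u, [/\ u ^+ p = u, (u ^+ 2 + 2) ^+ 2 = 2 & a + b * (u ^+ 2 + 2) = 0].
Proof.
move=> hab; pose s := z ^+ 2 - z ^+ 6.
have s2 : s ^+ 2 = 2.
  have -> : s ^+ 2 = z ^+ 4 - 2 * z ^+ 8 + z ^+ 4 * z ^+ 8 by rewrite /s; ring.
  by rewrite z8; ring.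
have : (a + b * s) * (a - b * s) = 0.
  have -> : (a + b * s) * (a - b * s) = a ^+ 2 - b ^+ 2 * s ^+ 2 by ring.
  by rewrite s2 hab; ring.
move/eqP; rewrite mulf_eq0 => /orP[] /eqP hs.
- exists (z ^+ 1 + z ^+ 7); rewrite pFrobenius_root8N1_fixed //.
  suff -> : (z ^+ 1 + z ^+ 7) ^+ 2 + 2 = s by [].
  transitivity (z ^+ 2 + 2 * z ^+ 8 + z ^+ 6 * z ^+ 8 + 2); first by ring.
  by rewrite z8 /s; ring.
- exists (z ^+ 3 + z ^+ 5); rewrite pFrobenius_root8N1_fixed //.
  suff -> : (z ^+ 3 + z ^+ 5) ^+ 2 + 2 = - s by rewrite sqrrN mulrN.
  transitivity (z ^+ 6 + 2 * z ^+ 8 + z ^+ 2 * z ^+ 8 + 2); first by ring.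
  by rewrite z8 /s; ring.
Qed.

End RootOfTheta16.

Lemma exists_theta_root_mod (p a b : nat) : prime p -> (p %% 16 = 7)%N ->
  (a ^ 2 = p + 2 * b ^ 2)%N ->
  exists r : int, (p %| (r ^+ 2 + 2) ^+ 2 - 2)%Z /\ (p %| a%:Z + b%:Z * (r ^+ 2 + 2))%Z.
Proof.
move=> p_pr p16 hab.
have [F pF cardF] := pPrimePowerField p_pr (isT : (0 < 2)%N).
have [z z8] : exists z : F, z ^+ 8 = -1.
  apply: finField_root8N1; rewrite cardF (divn_eq p 16) p16.
  rewrite (_ : _ ^ 2 = (16 * (p %/ 16) ^ 2 + 14 * (p %/ 16) + 3) * 16 + 1)%N.
    by rewrite addn1 succnK dvdn_mull.
  by ring.
have hab' : (a%:R : F) ^+ 2 = 2 * b%:R ^+ 2.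
  have : (a ^ 2)%:R = (p + 2 * b ^ 2)%:R :> F by rewrite hab.
  by rewrite natrD (pcharf0 pF) add0r natrM !natrX.
have [u [up u2 hu]] := exists_theta_mod pF p16 z8 hab'.
have [r ur] := pFrobenius_fixed_natr pF up.
exists r%:Z; rewrite !(dvdz_pcharf pF) !(intrB, intrD, intrM) !mulr1z -!pmulrn -ur.
by rewrite -!expr2 u2 hu subrr eqxx.
Qed.

Lemma zsqrt2_dvd_sub_rt2 x (S : int) : znorm x != 0 ->
  (znorm x %| rpart x + spart x * S)%Z -> (znorm x %| S ^+ 2 - 2)%Z ->
  exists c, x * c = S%:~R - rt2.
Proof.
move=> nx /dvdzP[u hu] /dvdzP[v hv].
exists (ZSqrt2 (S * u - spart x * v) (- u)); rewrite zsqrt2_int.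
move: nx hu hv; set n := znorm x; case: x @n => a b n nx hu hv.
apply: zsqrt2_ext => /=; apply: (mulIf nx).
- transitivity (a * S * (u * n) - a * b * (v * n) - 2 * b * (u * n)); first by ring.
  by rewrite -hu -hv /n /znorm /=; ring.
- transitivity (- a * (u * n) + b * S * (u * n) - b ^+ 2 * (v * n)); first by ring.
  by rewrite -hu -hv /n /znorm /=; ring.
Qed.

Theorem zsqrt2_prime_represented (p a b : nat) : prime p -> (p %% 16 = 7)%N ->
  (a ^ 2 = p + 2 * b ^ 2)%N -> exists e, bform e e = ZSqrt2 a b.
Proof.
move=> p_pr p16 hab; have p_gt0 := prime_gt0 p_pr.
have hpi : totpos (ZSqrt2 a b) by split; rewrite /=; nia.
have npi : znorm (ZSqrt2 a b) = p by rewrite /znorm /=; lia.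
have [r [hS hr]] := exists_theta_root_mod p_pr p16 hab.
have [C hC] : exists C, ZSqrt2 a b * C = (r ^+ 2 + 2)%:~R - rt2.
  by apply: zsqrt2_dvd_sub_rt2; rewrite npi //; lia.
apply: (scaled_gram_represents (scaled_gram_init (r := r%:~R) (C := C) hpi _)).
by rewrite hC !zsqrt2_int deltaE; apply: zsqrt2_ext => /=; ring.
Qed.

(** * Back to Q(zeta16) *)

Definition zeval (R : comRingType) (s : R) (x : zsqrt2) := (rpart x)%:~R + (spart x)%:~R * s.

Section Evaluation.
Variables (R : comRingType) (s : R).
Hypothesis s2 : s ^+ 2 = 2.

Lemma zevalD x y : zeval s (x + y) = zeval s x + zeval s y.
Proof. by rewrite /zeval /= !intrD; ring. Qed.

Lemma zevalM x y : zeval s (x * y) = zeval s x * zeval s y.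
Proof.
rewrite /zeval /= !(intrD, intrM) mulr1z.
have -> : 1 + 1 = s ^+ 2 :> R by rewrite s2.
by ring.
Qed.

Lemma zeval_delta : zeval s delta = 2 - s.
Proof. by rewrite deltaE /zeval /= mulN1r. Qed.

Lemma zeval_bform t x y : t ^+ 2 = s - 2 ->
  (zeval s x + zeval s y * t) * (zeval s x - zeval s y * t) = zeval s (bform (x, y) (x, y)).
Proof.
move=> t2; rewrite /bform /= zevalD !zevalM zeval_delta.
have -> : (zeval s x + zeval s y * t) * (zeval s x - zeval s y * t) =
  zeval s x ^+ 2 - zeval s y ^+ 2 * t ^+ 2 by ring.
by rewrite t2; ring.
Qed.

End Evaluation.

Lemma rmorph_zeval (R S : comRingType) (f : {rmorphism R -> S}) s x :
  f (zeval s x) = zeval (f s) x.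
Proof. by rewrite /zeval rmorphD rmorphM !rmorph_int. Qed.

Lemma zeta16_exp8 : zeta16 ^+ 8 = -1.
Proof. by rewrite /zeta16 rootCK. Qed.

Lemma zeta16_expE q r : zeta16 ^+ (8 * q + r) = (-1) ^+ q * zeta16 ^+ r.
Proof. by rewrite exprD exprM zeta16_exp8. Qed.

Lemma sqrt2E : sqrt2 = zeta16 ^+ 2 - zeta16 ^+ 6.
Proof. by rewrite /sqrt2 (zeta16_expE 1 6); ring. Qed.

Lemma sqrt2_sqr : sqrt2 ^+ 2 = 2.
Proof.
have -> : sqrt2 ^+ 2 = zeta16 ^+ 4 - 2 * zeta16 ^+ 8 + zeta16 ^+ 4 * zeta16 ^+ 8.
  by rewrite sqrt2E; ring.
by rewrite zeta16_exp8; ring.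
Qed.

Lemma sqrt2_theta16 : sqrt2 = theta16 ^+ 2 + 2.
Proof.
have -> : theta16 ^+ 2 = sqrt2 + 2 * zeta16 ^+ 8 by rewrite /theta16 /sqrt2; ring.
by rewrite zeta16_exp8; ring.
Qed.

Definition theta3 : algC := zeta16 ^+ 3 + zeta16 ^+ 5.

Lemma theta3_sqr : theta3 ^+ 2 = - sqrt2 - 2.
Proof.
have -> : theta3 ^+ 2 = zeta16 ^+ 6 + 2 * zeta16 ^+ 8 + zeta16 ^+ 2 * zeta16 ^+ 8.
  by rewrite /theta3; ring.
by rewrite sqrt2E zeta16_exp8; ring.
Qed.

Lemma sigma_theta i u : is_sigma i u -> u theta16 = zeta16 ^+ i + zeta16 ^+ (i * 7).
Proof. by move=> ui; rewrite rmorphD !rmorphXn /= ui -!exprM mulnC. Qed.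

Lemma sigma1_theta u : is_sigma 1 u -> u theta16 = theta16.
Proof. by move/sigma_theta->; rewrite expr1. Qed.
Lemma sigma7_theta u : is_sigma 7 u -> u theta16 = theta16.
Proof. by move/sigma_theta->; rewrite (zeta16_expE 6 1) /theta16; ring. Qed.
Lemma sigma9_theta u : is_sigma 9 u -> u theta16 = - theta16.
Proof. by move/sigma_theta->; rewrite (zeta16_expE 1 1) (zeta16_expE 7 7) /theta16; ring. Qed.
Lemma sigma15_theta u : is_sigma 15 u -> u theta16 = - theta16.
Proof. by move/sigma_theta->; rewrite (zeta16_expE 1 7) (zeta16_expE 13 1) /theta16; ring. Qed.
Lemma sigma3_theta u : is_sigma 3 u -> u theta16 = theta3.
Proof. by move/sigma_theta->; rewrite (zeta16_expE 2 5) /theta3; ring. Qed.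
Lemma sigma5_theta u : is_sigma 5 u -> u theta16 = theta3.
Proof. by move/sigma_theta->; rewrite (zeta16_expE 4 3) /theta3; ring. Qed.
Lemma sigma11_theta u : is_sigma 11 u -> u theta16 = - theta3.
Proof. by move/sigma_theta->; rewrite (zeta16_expE 1 3) (zeta16_expE 9 5) /theta3; ring. Qed.
Lemma sigma13_theta u : is_sigma 13 u -> u theta16 = - theta3.
Proof. by move/sigma_theta->; rewrite (zeta16_expE 1 5) (zeta16_expE 11 3) /theta3; ring. Qed.

Lemma in_Ztheta_zeval x y : in_Ztheta (zeval sqrt2 x + zeval sqrt2 y * theta16).
Proof.
exists ((rpart x + 2 * spart x)%:P + (rpart y + 2 * spart y)%:P * 'X
        + (spart x)%:P * 'X^2 + (spart y)%:P * 'X^3).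
rewrite !(rmorphD, rmorphM, rmorphXn) /= !map_polyC !map_polyX !hornerE /=.
by rewrite /zeval sqrt2_theta16 mulr1z; ring.
Qed.

Lemma rmorph_zeval_theta16 (u : {rmorphism algC -> algC}) t x y : u theta16 = t ->
  u (zeval sqrt2 x + zeval sqrt2 y * theta16) =
  zeval (t ^+ 2 + 2) x + zeval (t ^+ 2 + 2) y * t.
Proof.
move=> ut; have us : u sqrt2 = t ^+ 2 + 2.
  by rewrite sqrt2_theta16 rmorphD rmorphXn ut rmorph_nat.
by rewrite rmorphD rmorphM !rmorph_zeval us ut.
Qed.

Lemma sigma_pair_prod (u v : {rmorphism algC -> algC}) t x y :
  u theta16 = t -> v theta16 = - t -> (t ^+ 2 + 2) ^+ 2 = 2 ->
  u (zeval sqrt2 x + zeval sqrt2 y * theta16) * v (zeval sqrt2 x + zeval sqrt2 y * theta16)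
    = zeval (t ^+ 2 + 2) (bform (x, y) (x, y)).
Proof.
move=> /rmorph_zeval_theta16-> /rmorph_zeval_theta16-> ht.
by rewrite sqrrN mulrN; apply: zeval_bform => //; ring.
Qed.

Lemma sqrt2_norm_nat (p a b : nat) :
  (p%:R : algC) = (a%:R + b%:R * sqrt2) * (a%:R - b%:R * sqrt2) ->
  (a ^ 2 = p + 2 * b ^ 2)%N.
Proof.
move=> hp; apply/eqP; rewrite -(eqr_nat algC) natrD natrM !natrX hp.
have -> : (a%:R + b%:R * sqrt2) * (a%:R - b%:R * sqrt2) =
  a%:R ^+ 2 - b%:R ^+ 2 * sqrt2 ^+ 2 :> algC by ring.
by rewrite sqrt2_sqr; apply/eqP; ring.
Qed.

Unset Implicit Arguments.

Theorem lemma5 (p a b : nat) :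
  prime p -> (p %% 16 = 7)%N -> (0 < a)%N -> (0 < b)%N ->
  (p%:R : algC) = (a%:R + b%:R * sqrt2) * (a%:R - b%:R * sqrt2) ->
  exists alpha : algC, in_Ztheta alpha /\
    forall s1 s3 s5 s7 s9 s11 s13 s15 : {rmorphism algC -> algC},
      is_sigma 1 s1 -> is_sigma 3 s3 -> is_sigma 5 s5 -> is_sigma 7 s7 ->
      is_sigma 9 s9 -> is_sigma 11 s11 -> is_sigma 13 s13 -> is_sigma 15 s15 ->
      [/\ a%:R + b%:R * sqrt2 = s1 alpha * s15 alpha,
          a%:R + b%:R * sqrt2 = s7 alpha * s9 alpha,
          a%:R - b%:R * sqrt2 = s3 alpha * s13 alpha &
          a%:R - b%:R * sqrt2 = s5 alpha * s11 alpha].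
Proof.
move=> p_pr p16 _ _ /sqrt2_norm_nat hab.
have [[x y] hxy] := zsqrt2_prime_represented p_pr p16 hab.
exists (zeval sqrt2 x + zeval sqrt2 y * theta16); split; first exact: in_Ztheta_zeval.
move=> s1 s3 s5 s7 s9 s11 s13 s15 h1 h3 h5 h7 h9 h11 h13 h15.
have pair s t (u v : {rmorphism algC -> algC}) : t ^+ 2 + 2 = s -> s ^+ 2 = 2 ->
    u theta16 = t -> v theta16 = - t ->
    a%:R + b%:R * s = u (zeval sqrt2 x + zeval sqrt2 y * theta16)
                      * v (zeval sqrt2 x + zeval sqrt2 y * theta16).
  by move=> <- ht ut vt; rewrite (sigma_pair_prod x y ut vt ht) hxy.
have e16 : theta16 ^+ 2 + 2 = sqrt2 by rewrite -sqrt2_theta16.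
have e3 : theta3 ^+ 2 + 2 = - sqrt2 by rewrite theta3_sqr subrK.
have s2N : (- sqrt2) ^+ 2 = 2 by rewrite sqrrN sqrt2_sqr.
rewrite -!mulrN; split.
- exact: pair e16 sqrt2_sqr (sigma1_theta h1) (sigma15_theta h15).
- exact: pair e16 sqrt2_sqr (sigma7_theta h7) (sigma9_theta h9).
- exact: pair e3 s2N (sigma3_theta h3) (sigma13_theta h13).
- exact: pair e3 s2N (sigma5_theta h5) (sigma11_theta h11).
Qed.
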